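(* Let $A$ be a treatment taking values in a finite set $\mathcal{A}=\{a_1,\ldots,a_J\}$, let $X$ be a vector of measured pre-treatment covariates, and for each $a\in\mathcal{A}$ let $Y(a)$ be the potential outcome under treatment $a$, with observed binary outcome $Y=\sum_{j=1}^J Y(a_j)\mathbb{1}(A=a_j)$. Fix $x$ with $p_m:=\mathbb{P}(A=a_m\mid X=x)\in(0,1)$ for all $m$. For $a,a'\in\mathcal{A}$ with $a\neq a'$ define the confounding function $$c(a,a',x)=\mathbb{E}[Y(a)\mid A=a,X=x]-\mathbb{E}[Y(a)\mid A=a',X=x].$$ Consider the pairwise treatment effect between $a_j\neq a_k\in\mathcal{A}$ on the risk-difference scale, and suppose $Y(a)$ is not conditionally independent of $A$ given $X$ (treatment assignment is not ignorable). Then the bias incurred by ignoring unmeasured confounding, namely $$\mathrm{Bias}(a_j,a_k)=\mathbb{E}[Y\mid A=a_j,X=x]-\mathbb{E}[Y\mid A=a_k,X=x]-\mathbb{E}[Y(a_j)-Y(a_k)\mid X=x],$$ equals $$\mathrm{Bias}(a_j,a_k)=-p_j\,c(a_k,a_j,x)+p_k\,c(a_j,a_k,x)-\sum_{l:\,a_l\in\mathcal{A}\setminus\{a_j,a_k\}}p_l\{c(a_k,a_l,x)-c(a_j,a_l,x)\}.$$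
   Context: Potential outcomes framework: each unit has potential outcomes $Y(a_1),\ldots,Y(a_J)$, of which only the one for the received treatment is observed. The generalized propensity scores $\mathbb{P}(A=a_m\mid X=x)$ sum to 1 over $m$. The stable unit treatment value assumption (each unit's potential outcomes do not depend on other units' treatments) and overlap ($0<\mathbb{P}(A=a\mid X)<1$ for all $a$) are maintained. *)

From HB Require Import structures.
From mathcomp Require Import all_boot all_order all_algebra.
From mathcomp Require Import all_classical all_reals all_analysis.
Set Implicit Arguments. Unset Strict Implicit. Unset Printing Implicit Defensive.
Import Order.TTheory GRing.Theory Num.Theory.
Local Open Scope classical_set_scope.
Local Open Scope ring_scope.

Section Defs.
Context (d : measure_display) (T : measurableType d) (R : realType).

Definition cexp (P : probability T R) (B : set T) (f : T -> R) : R :=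
  fine (\int[P]_(w in B) (f w)%:E) / fine (P B).

Definition expect (P : probability T R) (f : T -> R) : R :=
  fine (\int[P]_w (f w)%:E).

Definition evA (J : nat) (A : T -> 'I_J) (m : 'I_J) : set T :=
  [set w | A w = m].

Definition indep_rv (P : probability T R) (J : nat) (V : T -> R)
  (A : T -> 'I_J) : Prop :=
  forall (B : set R) (m : 'I_J), measurable B ->
    P (V @^-1` B `&` evA A m) = (P (V @^-1` B) * P (evA A m))%E.

End Defs.

From HB Require Import structures.
From mathcomp Require Import all_boot all_order all_algebra ring.
From mathcomp Require Import all_classical all_reals all_analysis.
Set Implicit Arguments. Unset Strict Implicit. Unset Printing Implicit Defensive.
Import Order.TTheory GRing.Theory Num.Theory.
Local Open Scope classical_set_scope.
Local Open Scope ring_scope.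

(* Conditioning on X = x is built into P. Write mu m a := E[Y(a) | A = a_m].
   The law of total expectation over the partition {A = a_m} gives
   E[Y(a_j) - Y(a_k)] = sum_m p_m (mu m j - mu m k), and consistency gives
   E[Y | A = a_m] = mu m m, so the bias is linear in the mu's; substituting
   p_j + p_k + sum_(l <> j, k) p_l = 1 rearranges it into the
   confounding-function form. *)

Lemma bigD1_pair (R : nmodType) (J : nat) (F : 'I_J -> R) (j k : 'I_J) :
  j != k -> \sum_m F m = F j + F k + \sum_(l < J | (l != j) && (l != k)) F l.
Proof.
move=> jk; rewrite (bigD1 j) //= (bigD1 k) /=; last by rewrite eq_sym.
by rewrite addrA.
Qed.

Lemma pairwise_bias_identity (R : comPzRingType) (J : nat) (p : 'I_J -> R)
    (E : 'I_J -> 'I_J -> R) (j k : 'I_J) :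
  j != k -> \sum_m p m = 1 ->
  let c a a' := E a a - E a' a in
  E j j - E k k - (\sum_m p m * E m j - \sum_m p m * E m k)
  = - p j * c k j + p k * c j k
    - \sum_(l < J | (l != j) && (l != k)) p l * (c k l - c j l).
Proof.
move=> jk p1 c; rewrite /c.
have expand l : p l * (E k k - E l k - (E j j - E l j))
    = p l * (E k k - E j j) + p l * E l j - p l * E l k by ring.
rewrite (eq_bigr _ (fun l _ => expand l)) !big_split /= sumrN -mulr_suml.
rewrite !(bigD1_pair _ jk) in p1 *.
set rest := \sum_(l < J | _) p l in p1 *.
have -> : rest = 1 - p j - p k by rewrite -p1; ring.
ring.
Qed.

Lemma sum_mul_indicator (R : pzSemiRingType) (J : nat) (F : 'I_J -> R)
    (a : 'I_J) :
  \sum_m F m * (a == m)%:R = F a.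
Proof.
rewrite (bigD1 a) //= eqxx mulr1 big1 ?addr0 // => m.
by rewrite eq_sym => /negbTE ->; rewrite mulr0.
Qed.

Section Expectation.
Context (d : measure_display) (T : measurableType d) (R : realType)
  (P : probability T R).

Lemma bounded_integrable (f : T -> R) (M : R) :
  measurable_fun setT f -> (forall w, `|f w| <= M) ->
  P.-integrable setT (EFin \o f).
Proof.
move=> mf fM; apply: measurable_bounded_integrable => //.
- by rewrite (le_lt_trans (probability_le1 _ _)) // ltry.
- exists M; split; first exact: num_real.
  by move=> M' /ltW M'M w _; exact: le_trans (fM w) M'M.
Qed.

Lemma expectB (f g : T -> R) :
  P.-integrable setT (EFin \o f) -> P.-integrable setT (EFin \o g) ->
  expect P (fun w => f w - g w) = expect P f - expect P g.
Proof.
move=> intf intg; rewrite /expect; under eq_integral do rewrite EFinB.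
by rewrite integralB_EFin // fineB //; exact: integrable_fin_num.
Qed.

Lemma cexp_eq_in (B : set T) (f g : T -> R) :
  {in B, f =1 g} -> cexp P B f = cexp P B g.
Proof.
by move=> fg; rewrite /cexp; congr (fine _ / _); apply: eq_integral => w /fg ->.
Qed.

Variables (J : nat) (A : T -> 'I_J).
Hypothesis mA : forall m, measurable (evA A m).

Let trivIset_evA : trivIset setT (evA A).
Proof. by move=> i l _ _ [w [/= <- <-]]. Qed.

Let bigsetU_evA : \big[setU/set0]_(m < J) evA A m = setT.
Proof.
apply/seteqP; split => // w _.
by rewrite -bigcup_seq; exists (A w); rewrite /= ?mem_index_enum.
Qed.

Lemma sum_prob_evA : \sum_m fine (P (evA A m)) = 1.
Proof.
rewrite sum_fine => [|m _]; last exact: fin_num_measure.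
rewrite -measure_bigsetU_ord // bigsetU_evA.
by rewrite -[RHS]/(fine 1%E); congr fine; exact: probability_setT.
Qed.

Lemma expect_sum_evA (f : T -> R) : P.-integrable setT (EFin \o f) ->
  expect P f = \sum_m fine (\int[P]_(w in evA A m) (f w)%:E).
Proof.
move=> intf; rewrite /expect -bigsetU_evA integral_bigsetU_EFin //.
- rewrite sum_fine // => m _; apply: integrable_fin_num => //.
  exact: integrableS intf.
- exact: index_enum_uniq.
- exact: sub_trivIset trivIset_evA.
- by rewrite bigsetU_evA; case/integrableP: intf.
Qed.

Lemma expect_total (f : T -> R) : P.-integrable setT (EFin \o f) ->
  (forall m, fine (P (evA A m)) != 0) ->
  expect P f = \sum_m fine (P (evA A m)) * cexp P (evA A m) f.
Proof.
move=> intf p0; rewrite expect_sum_evA //.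
by apply: eq_bigr => m _; rewrite /cexp mulrC divfK.
Qed.

End Expectation.

Theorem theorem1 (d : measure_display) (T : measurableType d) (R : realType)
  (P : probability T R) (J : nat) (A : T -> 'I_J) (Yp : 'I_J -> T -> R)
  (Y : T -> R)
  (hA : forall m, measurable (evA A m))
  (hYm : forall a, measurable_fun setT (Yp a))
  (hYbin : forall a w, Yp a w = 0 \/ Yp a w = 1)
  (hY : forall w, Y w = \sum_(m < J) Yp m w * (A w == m)%:R)
  (hover : forall m, 0 < fine (P (evA A m)) < 1)
  (hnonign : exists a, ~ indep_rv P (Yp a) A)
  (j k : 'I_J) (hjk : j != k) :
  let p m := fine (P (evA A m)) in
  let c a a' := cexp P (evA A a) (Yp a) - cexp P (evA A a') (Yp a) in
  cexp P (evA A j) Y - cexp P (evA A k) Y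
    - expect P (fun w => Yp j w - Yp k w)
  = - p j * c k j + p k * c j k
    - \sum_(l < J | (l != j) && (l != k)) p l * (c k l - c j l).
Proof.
move=> p c.
have intY a : P.-integrable setT (EFin \o Yp a).
  have Yp_le1 w : `|Yp a w| <= 1.
    by case: (hYbin a w) => ->; rewrite ?normr0 ?normr1.
  exact: bounded_integrable (hYm a) Yp_le1.
have p0 m : p m != 0 by case/andP: (hover m) => /lt0r_neq0.
have consistency m : cexp P (evA A m) Y = cexp P (evA A m) (Yp m).
  by apply: cexp_eq_in => w; rewrite inE /evA /= hY sum_mul_indicator => ->.
rewrite !consistency expectB // !(expect_total hA) //.
pose mu m a := cexp P (evA A m) (Yp a).
by rewrite (pairwise_bias_identity mu hjk (sum_prob_evA P hA)).
Qed.
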